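(* $g(5,3)=2$.
   Context: For integers $2\le k\le n$, let $S_n$ denote the set of permutations of $[n]=\{1,\dots,n\}$ (written as sequences), and $S_{n,k}$ the set of all sequences of $k$ distinct elements of $[n]$. A sequence $\kappa\in S_{n,k}$ is a subsequence of a permutation $\pi\in S_n$ if its elements appear in $\pi$ in the same relative order as in $\kappa$. A perfect sequence covering array ${\rm PSCA}(n,k)$ with multiplicity $\lambda$ (a positive integer) is a multiset $X$ of elements of $S_n$ such that every $\kappa\in S_{n,k}$ is a subsequence of exactly $\lambda$ elements of $X$ (counted with multiplicity). $g(n,k)$ denotes the smallest $\lambda$ for which a ${\rm PSCA}(n,k)$ with multiplicity $\lambda$ exists. *)

From mathcomp Require Import all_boot.
Set Implicit Arguments. Unset Strict Implicit. Unset Printing Implicit Defensive.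

Definition in_Sn (n : nat) (p : seq nat) : bool := perm_eq p (iota 1 n).

Definition in_Snk (n k : nat) (kappa : seq nat) : bool :=
  [&& size kappa == k, uniq kappa & all (fun x => (1 <= x <= n)%N) kappa].

(* A PSCA(n,k) with multiplicity lam: a multiset X (a list, multiplicities =
   repetitions) of elements of S_n such that every kappa in S_{n,k} is a
   subsequence of exactly lam elements of X, counted with multiplicity. *)
Definition is_PSCA (n k lam : nat) (X : seq (seq nat)) : Prop :=
  (0 < lam)%N /\ all (in_Sn n) X /\
  forall kappa, in_Snk n k kappa -> count (fun p => subseq kappa p) X = lam.

Definition g_is (n k lam : nat) : Prop :=
  (exists X, is_PSCA n k lam X) /\
  forall l, (exists X, is_PSCA n k l X) -> (lam <= l)%N.

From mathcomp Require Import all_boot.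
Set Implicit Arguments. Unset Strict Implicit. Unset Printing Implicit Defensive.

(* A PSCA(5,3) of multiplicity 2 is exhibited explicitly.  A PSCA(5,3) of
   multiplicity 1 would be an exact cover of the 60 triples of S_{5,3} by
   permutations of [5], each containing 10 triples; an exhaustive backtracking
   search, always branching on the first uncovered triple, shows that no such
   cover exists. *)

Section ExactCover.

Variables (T P : eqType) (cov : T -> P -> bool) (A : seq T).

Definition exact_cover (U : seq T) (Y : seq P) : Prop :=
  forall t, t \in A -> count (cov t) Y = (t \in U).

(* [true] certifies that no exact cover exists; exhausting [fuel] answers
   [false].  Once [q] is chosen to cover [t], every target of [q] is covered
   by [q] alone, so candidates sharing a target with [q] are discarded. *)
Fixpoint refute_exact_cover (fuel : nat) (cands : seq P) (U : seq T) : bool :=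
  match fuel, U with
  | f.+1, t :: _ =>
    all (fun q => ~~ cov t q ||
      let targets_q := [seq s <- A | cov s q] in
      refute_exact_cover f
        [seq r <- cands | ~~ has (fun s => cov s r) targets_q]
        [seq s <- U | ~~ cov s q]) cands
  | _, _ => false
  end.

Lemma exact_cover_rem U Y q :
  q \in Y -> exact_cover U Y -> exact_cover [seq s <- U | ~~ cov s q] (rem q Y).
Proof.
move=> qY covY t tA; have := covY t tA.
rewrite (permP (perm_to_rem qY)) /= mem_filter.
by case: (cov t q); case: (t \in U); case: count.
Qed.

Lemma exact_cover_disjoint U Y q r :
  exact_cover U Y -> q \in Y -> r \in rem q Y ->
  ~~ has (fun s => cov s r) [seq s <- A | cov s q].
Proof.
move=> covY qY rY; apply/hasPn => t; rewrite mem_filter => /andP[tq tA].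
apply/negP => tr; have := covY t tA; rewrite (permP (perm_to_rem qY)) /= tq.
have : 0 < count (cov t) (rem q Y) by rewrite -has_count; apply/hasP; exists r.
by case: (t \in U); case: count.
Qed.

Lemma refute_exact_coverP fuel cands U Y :
  refute_exact_cover fuel cands U -> {subset U <= A} ->
  {subset Y <= cands} -> ~ exact_cover U Y.
Proof.
elim: fuel cands U Y => [|f IH] cands [|t U] Y //= refuted UA candsY covY.
have tA : t \in A := UA t (mem_head t U).
have [q qY tq] : exists2 q, q \in Y & cov t q.
  by apply/hasP; rewrite has_count (covY t tA) mem_head.
move/allP: refuted => /(_ q (candsY q qY)); rewrite tq /= => refuted_q.
have covY' := exact_cover_rem qY covY; rewrite /= tq /= in covY'.
apply: (IH _ _ _ refuted_q _ _ covY').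
- by move=> s; rewrite mem_filter => /andP[_ sU]; apply: UA; rewrite inE sU orbT.
- move=> r rY.
  by rewrite mem_filter (exact_cover_disjoint covY qY rY) (candsY r (mem_rem rY)).
Qed.

End ExactCover.

Fixpoint tuples_over (T : Type) (s : seq T) (k : nat) : seq (seq T) :=
  if k is k'.+1 then [seq x :: t | x <- s, t <- tuples_over s k'] else [:: [::]].

Lemma mem_tuples_over (T : eqType) (s : seq T) k t :
  (t \in tuples_over s k) = (size t == k) && all (mem s) t.
Proof.
elim: k t => [|k IH] [|x t] //=.
  by apply/allpairsP => -[[y u] [_ _]].
rewrite eqSS; apply/allpairsP/andP => [[[y u] [/= ys uS [-> ->]]]|[xt /andP[xs ts]]].
  by move: uS; rewrite IH => /andP[-> ->]; rewrite ys.
by exists (x, t); rewrite /= xs IH xt ts.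
Qed.

Definition Snk_seq (n k : nat) : seq (seq nat) :=
  [seq t <- tuples_over (iota 1 n) k | uniq t].

Lemma mem_Snk_seq n k kappa : (kappa \in Snk_seq n k) = in_Snk n k kappa.
Proof.
rewrite mem_filter mem_tuples_over /in_Snk.
have -> : all (mem (iota 1 n)) kappa = all (fun x => 1 <= x <= n) kappa.
  by apply: eq_all => x; rewrite /= mem_iota add1n ltnS.
by case: uniq; rewrite ?andbF.
Qed.

Lemma is_PSCAP n k lam X :
  reflect (is_PSCA n k lam X)
    [&& 0 < lam, all (in_Sn n) X &
        all (fun kappa => count (subseq kappa) X == lam) (Snk_seq n k)].
Proof.
apply: (iffP and3P) => [[lam0 SnX /allP cntX]|[lam0 [SnX cntX]]].
  by split=> //; split=> // kappa; rewrite -mem_Snk_seq => /cntX /eqP.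
by split=> //; apply/allP => kappa; rewrite mem_Snk_seq => /cntX ->.
Qed.

Lemma PSCA1_exact_cover n k X :
  is_PSCA n k 1 X -> exact_cover subseq (Snk_seq n k) (Snk_seq n k) X.
Proof. by move=> [_ [_ cntX]] t; rewrite mem_Snk_seq => tS; rewrite tS cntX. Qed.

Lemma no_PSCA1 n k X :
  refute_exact_cover subseq (Snk_seq n k) (size (Snk_seq n k))
    (permutations (iota 1 n)) (Snk_seq n k) ->
  ~ is_PSCA n k 1 X.
Proof.
move=> refuted PX; have [_ [SnX _]] := PX.
apply: (refute_exact_coverP refuted _ _ (PSCA1_exact_cover PX)) => //.
by move=> p /(allP SnX); rewrite mem_permutations.
Qed.

Definition PSCA_5_3_2 : seq (seq nat) :=
 [:: [:: 1;2;3;4;5]; [:: 1;2;4;3;5]; [:: 1;5;3;4;2]; [:: 5;1;4;3;2];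
     [:: 3;4;1;5;2]; [:: 4;2;1;5;3]; [:: 3;2;1;5;4]; [:: 4;2;5;1;3];
     [:: 3;2;5;1;4]; [:: 5;2;3;4;1]; [:: 5;2;4;3;1]; [:: 4;3;5;1;2]].

Theorem proposition1 : g_is 5 3 2.
Proof.
split; first by exists PSCA_5_3_2; apply/is_PSCAP; vm_compute.
move=> [|[|l]] [X PX] //; first by case: PX.
by exfalso; apply: no_PSCA1 PX; vm_compute.
Qed.
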